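(* Let $f:M\to\mathbb{R}^3$ be an immersion of a surface with an eq\''uiaffine transversal vector field $\xi$ and positive definite induced bilinear form $h$, let $(u,v)$ be local isothermal coordinates with $h(\partial_u,\partial_u)=h(\partial_v,\partial_v)=\rho$, $h(\partial_u,\partial_v)=0$, and let $\nu$ be the co-normal ($\nu\cdot f_u=\nu\cdot f_v=0$, $\nu\cdot\xi=1$). Let $(b_{ij})$ be the matrix of the shape operator in these coordinates, i.e. $\xi_u=-b_{11}f_u-b_{21}f_v$, $\xi_v=-b_{12}f_u-b_{22}f_v$. Then $$\begin{pmatrix} b_{11}&b_{12}\\ b_{21}&b_{22}\end{pmatrix}=-\frac{1}{\delta}\begin{pmatrix}\nu_{uu}\cdot\xi & \nu_{uv}\cdot\xi\\ \nu_{uv}\cdot\xi & \nu_{vv}\cdot\xi\end{pmatrix},\qquad \delta=\frac{[f_u,f_v,\xi]\,[\nu,\nu_u,\nu_v]}{\rho}.$$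
   Context: $D$ denotes the flat connection of $\mathbb{R}^3$; $h$, the shape operator $B$ and the $1$-form $\tau$ are defined by $D_Xf_*Y=f_*(\nabla_XY)+h(X,Y)\xi$ and $D_X\xi=-f_*(BX)+\tau(X)\xi$; $\xi$ is eq\''uiaffine if $\tau=0$. $\cdot$ is the Euclidean inner product, $[a,b,c]$ the determinant of three vectors, subscripts denote partial derivatives. *)

From HB Require Import structures.
From mathcomp Require Import all_boot all_order all_algebra.
From mathcomp Require Import all_classical all_reals all_analysis.
Set Implicit Arguments. Unset Strict Implicit. Unset Printing Implicit Defensive.
Import Order.TTheory GRing.Theory Num.Theory.
Import numFieldNormedType.Exports.
Local Open Scope classical_set_scope.
Local Open Scope ring_scope.

Section Defs.
Variable R : realType.
Local Notation V3 := 'rV[R]_3.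

Definition dot (a b : V3) : R := \sum_(i < 3) a 0 i * b 0 i.

Definition det3 (a b c : V3) : R :=
  \det (\matrix_(i < 3, j < 3)
          (if val i == 0%N then a 0 j else if val i == 1%N then b 0 j else c 0 j)).

Definition pu (F : R -> R -> V3) : R -> R -> V3 :=
  fun u v => derive1 (fun s => F s v) u.
Definition pv (F : R -> R -> V3) : R -> R -> V3 :=
  fun u v => derive1 (fun t => F u t) v.

Definition dpart (s : seq bool) (F : R -> R -> V3) : R -> R -> V3 :=
  foldr (fun b G => if b then pv G else pu G) F s.

Definition smooth_on (U : set (R * R)) (F : R -> R -> V3) : Prop :=
  forall (s : seq bool) (p : R * R), U p ->
    [/\ derivable (fun x => dpart s F x p.2) p.1 1,
        derivable (fun y => dpart s F p.1 y) p.2 1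
      & {for p, continuous (fun q : R * R => dpart s F q.1 q.2)}].
End Defs.

From HB Require Import structures.
From mathcomp Require Import all_boot all_order all_algebra.
From mathcomp Require Import all_classical all_reals all_analysis.
From mathcomp Require Import ring lra.
Set Implicit Arguments. Unset Strict Implicit. Unset Printing Implicit Defensive.
Import Order.TTheory GRing.Theory Num.Theory.
Import numFieldNormedType.Exports.
Local Open Scope classical_set_scope.
Local Open Scope ring_scope.

(* Differentiating the co-normal relations nu.f_u = nu.f_v = 0 and nu.xi = 1 and
   using the Gauss and Weingarten formulas gives nu_u.f_u = nu_v.f_v = -rho,
   nu_u.f_v = nu_v.f_u = 0 and nu_u.xi = nu_v.xi = 0.  Hence the Gram matrix of the
   frames (f_u, f_v, xi) and (nu, nu_u, nu_v) has determinant rho^2, i.e. delta = rho,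
   and differentiating nu_u.xi = nu_v.xi = 0 once more gives nu_ij.xi = -rho b_ij.
   The symmetry of mixed partials needed on the way follows from the mean value
   theorem applied twice to a second difference. *)

Section Frame.
Variable R : realType.
Local Notation V3 := 'rV[R]_3.

Lemma dotE (a b : V3) : dot a b = a 0 0 * b 0 0 + a 0 1 * b 0 1 + a 0 2%:R * b 0 2%:R.
Proof.
rewrite /dot !big_ord_recr big_ord0 /= add0r.
by congr (_ + _ + _); congr (_ * _); congr (_ _ _); apply/val_inj.
Qed.

Lemma dotC (a b : V3) : dot a b = dot b a.
Proof. by rewrite !dotE; ring. Qed.

Lemma dotDr (a b c : V3) : dot a (b + c) = dot a b + dot a c.
Proof. by rewrite !dotE !mxE; ring. Qed.

Lemma dotNr (a b : V3) : dot a (- b) = - dot a b.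
Proof. by rewrite !dotE !mxE; ring. Qed.

Lemma dotZr (a : V3) k (b : V3) : dot a (k *: b) = k * dot a b.
Proof. by rewrite !dotE !mxE; ring. Qed.

Lemma det_mx33 (M : 'M[R]_3) : \det M =
  M 0 0 * (M 1 1 * M 2%:R 2%:R - M 1 2%:R * M 2%:R 1)
  - M 0 1 * (M 1 0 * M 2%:R 2%:R - M 1 2%:R * M 2%:R 0)
  + M 0 2%:R * (M 1 0 * M 2%:R 1 - M 1 1 * M 2%:R 0).
Proof.
have -> : M = \matrix_(i, j) M (inord i) (inord j).
  by apply/matrixP => i j; rewrite mxE !inord_val.
rewrite !(expand_det_row _ 0) !big_ord_recr !big_ord0 /= /cofactor.
rewrite !(expand_det_row _ 0) !big_ord_recr !big_ord0 /= /cofactor.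
by rewrite !det_mx11 !mxE /= !expr0 !expr1 ?exprS; ring.
Qed.

Definition row3 (a b c : V3) (i : 'I_3) : V3 :=
  if val i == 0%N then a else if val i == 1%N then b else c.

Lemma det3E (a b c : V3) : det3 a b c = \det (\matrix_(i, j) row3 a b c i 0 j).
Proof.
by congr (\det _); apply/matrixP => i j; rewrite !mxE /row3; case: ifP => //; case: ifP.
Qed.

(* Cauchy-Binet: [a,b,c] [d,e,g] is the determinant of the Gram matrix of the two triples. *)
Lemma det3_mul (a b c d e g : V3) : det3 a b c * det3 d e g =
    dot a d * (dot b e * dot c g - dot b g * dot c e)
  - dot a e * (dot b d * dot c g - dot b g * dot c d)
  + dot a g * (dot b d * dot c e - dot b e * dot c d).
Proof.
rewrite !det3E -[X in _ * X]det_tr -det_mulmx.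
have -> : (\matrix_(i, j) row3 a b c i 0 j) *m (\matrix_(i, j) row3 d e g i 0 j)^T
    = \matrix_(i, j) dot (row3 a b c i) (row3 d e g j).
  by apply/matrixP => i j; rewrite !mxE; apply: eq_bigr => k _; rewrite !mxE.
by rewrite det_mx33 !mxE.
Qed.

Lemma dot_conormal_frame (n a b x : V3) (c1 c2 r : R) :
  dot n a = 0 -> dot n b = 0 -> dot n x = 1 -> dot n (c1 *: a + c2 *: b + r *: x) = r.
Proof. by move=> na nb nx; rewrite !dotDr !dotZr na nb nx; ring. Qed.

Lemma det3_dual_frame (a b x n m p : V3) (r : R) : r != 0 ->
  dot n a = 0 -> dot n b = 0 -> dot n x = 1 ->
  dot m a = - r -> dot m b = 0 -> dot m x = 0 ->
  dot p a = 0 -> dot p b = - r -> dot p x = 0 ->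
  det3 a b x * det3 n m p / r = r.
Proof.
move=> r_neq0 na nb nx ma mb mx pa pb px.
rewrite det3_mul !(dotC a) !(dotC b) !(dotC x) na nb nx ma mb mx pa pb px.
by field.
Qed.
End Frame.

Section Partials.
Variable R : realType.
Local Notation V3 := 'rV[R]_3.

Lemma derive1_entry (a : R -> V3) x i : derivable a x 1 ->
  derivable (fun s => a s 0 i) x 1 /\ derive1 (fun s => a s 0 i) x = derive1 a x 0 i.
Proof.
move=> da; split; first by move/derivable_mxP: da; apply.
by rewrite !derive1E derive_mx // mxE.
Qed.

Lemma derive1_dot (a b : R -> V3) x : derivable a x 1 -> derivable b x 1 ->
  derivable (fun s => dot (a s) (b s)) x 1 /\
  derive1 (fun s => dot (a s) (b s)) x = dot (derive1 a x) (b x) + dot (a x) (derive1 b x).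
Proof.
move=> da db.
have -> : (fun s => dot (a s) (b s)) = \sum_(i < 3) ((fun s => a s 0 i) * (fun s => b s 0 i)).
  by apply/funext => s; rewrite /dot fct_sumE.
have dab i : derivable ((fun s => a s 0 i) * (fun s => b s 0 i)) x 1.
  by have [[dai _] [dbi _]] := (derive1_entry i da, derive1_entry i db); apply: derivableM.
split; first exact: derivable_sum.
rewrite derive1E derive_sum // /dot -big_split /=; apply: eq_bigr => i _.
have [[dai Dai] [dbi Dbi]] := (derive1_entry i da, derive1_entry i db).
by rewrite deriveM // -!derive1E Dai Dbi /GRing.scale /=; ring.
Qed.

Lemma derive1_dot_near_const (a b : R -> V3) x (c : R) :
  derivable a x 1 -> derivable b x 1 -> (\forall s \near x, dot (a s) (b s) = c) ->
  dot (derive1 a x) (b x) = - dot (a x) (derive1 b x).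
Proof.
move=> da db ab_c; apply/eqP; rewrite -addr_eq0 -(derive1_dot da db).2.
by rewrite derive1E (@near_eq_derive _ _ _ _ (cst c)) // derive_cst.
Qed.

Lemma nbhs_pair_fst (P : set (R * R)) (u v : R) : nbhs (u, v) P -> \forall s \near u, P (s, v).
Proof. exact: (cvg_pair (@cvg_id _ (nbhs u)) (cvg_cst v)). Qed.

Lemma nbhs_pair_snd (P : set (R * R)) (u v : R) : nbhs (u, v) P -> \forall t \near v, P (u, t).
Proof. exact: (cvg_pair (cvg_cst u) (@cvg_id _ (nbhs v))). Qed.

Lemma smooth_on_pu (U : set (R * R)) (F : R -> R -> V3) : smooth_on U F -> smooth_on U (pu F).
Proof. by move=> sF s p Up; have := sF (rcons s false) p Up; rewrite /dpart -cats1 foldr_cat. Qed.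

Lemma smooth_on_pv (U : set (R * R)) (F : R -> R -> V3) : smooth_on U F -> smooth_on U (pv F).
Proof. by move=> sF s p Up; have := sF (rcons s true) p Up; rewrite /dpart -cats1 foldr_cat. Qed.

Section ConstantPairing.
Variables (U : set (R * R)) (a b : R -> R -> V3) (c : R).
Hypotheses (oU : open U) (sa : smooth_on U a) (sb : smooth_on U b).
Hypothesis ab_c : forall s t, U (s, t) -> dot (a s t) (b s t) = c.

Lemma pu_dot_const u v : U (u, v) -> dot (pu a u v) (b u v) = - dot (a u v) (pu b u v).
Proof.
move=> Uuv; have [[da _ _] [db _ _]] := (sa [::] Uuv, sb [::] Uuv).
apply: (derive1_dot_near_const da db); apply: filterS (nbhs_pair_fst _) => [s|]; first exact: ab_c.
exact: open_nbhs_nbhs.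
Qed.

Lemma pv_dot_const u v : U (u, v) -> dot (pv a u v) (b u v) = - dot (a u v) (pv b u v).
Proof.
move=> Uuv; have [[_ da _] [_ db _]] := (sa [::] Uuv, sb [::] Uuv).
apply: (derive1_dot_near_const da db); apply: filterS (nbhs_pair_snd _) => [t|]; first exact: ab_c.
exact: open_nbhs_nbhs.
Qed.

End ConstantPairing.
End Partials.

Section MixedPartials.
Variable R : realType.
Local Notation V3 := 'rV[R]_3.

Lemma derivable_MVT (g : R -> R) a b : a < b -> (forall x, a <= x <= b -> derivable g x 1) ->
  exists2 c, a <= c <= b & g b - g a = derive1 g c * (b - a).
Proof.
move=> ab dg.
have hd x : x \in `]a, b[ -> is_derive x 1 g (derive1 g x).
  by rewrite in_itv derive1E => /andP[ax xb]; apply/derivableP/dg; rewrite !ltW.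
have hc : {within `[a, b], continuous g}.
  apply: continuous_in_subspaceT => x; rewrite inE /= in_itv /= => xab.
  exact/differentiable_continuous/derivable1_diffP/dg.
have [c] := MVT ab hd hc; rewrite in_itv /= => /andP[ac cb] ->.
by exists c; rewrite ?ltW.
Qed.

Definition square (u v h : R) : set (R * R) :=
  [set p | u <= p.1 <= u + h /\ v <= p.2 <= v + h].

Lemma nbhs_square (P : set (R * R)) (u v : R) : nbhs (u, v) P ->
  exists2 h, 0 < h & square u v h `<=` P.
Proof.
move=> /nbhs_ballP[e e_gt0 eP]; exists (e / 2) => [|[s t] [/andP[/= us su] /andP[/= vt tv]]].
  by rewrite divr_gt0.
apply: eP; split; rewrite /ball /= distrC ger0_norm ?subr_ge0 //; move: e_gt0 su tv => /= *; lra.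
Qed.

Lemma second_difference_MVT (G G1 G12 : R -> R -> R) u v h : 0 < h ->
  (forall s t, square u v h (s, t) ->
     derivable (G^~ t) s 1 /\ derive1 (G^~ t) s = G1 s t) ->
  (forall s t, square u v h (s, t) ->
     derivable (G1 s) t 1 /\ derive1 (G1 s) t = G12 s t) ->
  exists2 p, square u v h p &
    G (u + h) (v + h) - G (u + h) v - G u (v + h) + G u v = G12 p.1 p.2 * (h * h).
Proof.
move=> h_gt0 dG dG1.
have uh : u < u + h by rewrite ltrDl.
have vh : v < v + h by rewrite ltrDl.
have v_in : v <= v <= v + h by rewrite lexx ltW.
have vh_in : v <= v + h <= v + h by rewrite lexx ltW.
have [c c_in Dc] := derivable_MVT uh
  (fun s s_in => derivableB (dG s _ (conj s_in vh_in)).1 (dG s _ (conj s_in v_in)).1).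
have [d d_in Dd] := derivable_MVT vh (fun t t_in => (dG1 c t (conj c_in t_in)).1).
exists (c, d) => //=.
have [[dGc1 DGc1] [dGc2 DGc2]] := (dG c _ (conj c_in vh_in), dG c _ (conj c_in v_in)).
have -> : G (u + h) (v + h) - G (u + h) v - G u (v + h) + G u v
    = (G (u + h) (v + h) - G (u + h) v) - (G u (v + h) - G u v) by ring.
by rewrite Dc derive1E deriveB // -!derive1E DGc1 DGc2 Dd (dG1 c d (conj c_in d_in)).2; ring.
Qed.

Lemma mixed_partials_square (U : set (R * R)) (F : R -> R -> V3) u v h i :
  smooth_on U F -> 0 < h -> square u v h `<=` U ->
  exists2 p, square u v h p & exists2 q, square u v h q &
    pv (pu F) p.1 p.2 0 i = pu (pv F) q.1 q.2 0 i.
Proof.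
move=> sF h_gt0 sqU.
have du_entry (s : R) (b : seq bool) (t : R) : square u v h (s, t) ->
    derivable (fun x => dpart b F x t 0 i) s 1 /\
    derive1 (fun x => dpart b F x t 0 i) s = pu (dpart b F) s t 0 i.
  by move=> /sqU Ust; have [d _ _] := sF b _ Ust; exact: derive1_entry.
have dv_entry (s : R) (b : seq bool) (t : R) : square u v h (s, t) ->
    derivable (fun y => dpart b F s y 0 i) t 1 /\
    derive1 (fun y => dpart b F s y 0 i) t = pv (dpart b F) s t 0 i.
  by move=> /sqU Ust; have [_ d _] := sF b _ Ust; exact: derive1_entry.
have swap t s : square v u h (t, s) -> square u v h (s, t) by case.
have [p p_in Dp] := second_difference_MVT (G := fun s t => F s t 0 i)
  (G1 := fun s t => pu F s t 0 i) (G12 := fun s t => pv (pu F) s t 0 i) h_gt0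
  (fun s t st => du_entry s [::] t st) (fun s t st => dv_entry s [:: false] t st).
have [q q_in Dq] := second_difference_MVT (G := fun t s => F s t 0 i)
  (G1 := fun t s => pv F s t 0 i) (G12 := fun t s => pu (pv F) s t 0 i) h_gt0
  (fun t s ts => dv_entry s [::] t (swap t s ts))
  (fun t s ts => du_entry s [:: true] t (swap t s ts)).
exists p => //; exists (q.2, q.1); first by case: q q_in {Dq} => t s /swap.
have hh : h * h != 0 by rewrite mulf_neq0 // gt_eqF.
apply: (mulIf hh) => /=.
rewrite -[LHS]Dp -[RHS]Dq; congr (_ + _); exact: addrAC.
Qed.

Lemma normr_entry_le (M : V3) i : `|M 0 i| <= `|M|.
Proof.
rewrite [leRHS]/Num.Def.normr /= mx_normrE.
by apply: le_trans; last exact: (le_bigmax _ _ (0, i)).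
Qed.

Lemma near_entry (G : R * R -> V3) p i e : 0 < e -> {for p, continuous G} ->
  \forall q \near p, `|G q 0 i - G p 0 i| < e.
Proof.
move=> e_gt0 /cvgrPdist_lt /(_ e e_gt0); apply: filterS => q.
have := normr_entry_le (G p - G q) i; rewrite !mxE distrC; exact: le_lt_trans.
Qed.

Lemma ler_dist_half (A B X Y e : R) :
  X = Y -> `|Y - A| < e / 2 -> `|X - B| < e / 2 -> `|A - B| <= e.
Proof.
move=> -> YA YB; apply: le_trans (ler_distD Y A B) _.
by rewrite [e]splitr ltW // ltrD // distrC.
Qed.

Lemma pu_pvC (U : set (R * R)) (F : R -> R -> V3) u v :
  open U -> smooth_on U F -> U (u, v) -> pu (pv F) u v = pv (pu F) u v.
Proof.
move=> oU sF Uuv; apply/rowP => i; apply/eqP; rewrite -subr_eq0 -normr_le0.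
apply/ler_addgt0Pr => e e_gt0; rewrite add0r.
have e2_gt0 : 0 < e / 2 by rewrite divr_gt0.
have [[_ _ cA] [_ _ cB]] := (sF [:: false; true] _ Uuv, sF [:: true; false] _ Uuv).
have nU : nbhs (u, v) U by exact: open_nbhs_nbhs.
have [h h_gt0 sqP] :=
  nbhs_square (filterI nU (filterI (near_entry i e2_gt0 cA) (near_entry i e2_gt0 cB))).
have [p /sqP[_ [_ Bp]] [q /sqP[_ [Aq _]] pq]] :=
  mixed_partials_square i sF h_gt0 (fun p p_in => (sqP p p_in).1).
exact: ler_dist_half pq Aq Bp.
Qed.
End MixedPartials.

Section ShapeOperator.
Variable R : realType.
Local Notation V3 := 'rV[R]_3.
Variables (U : set (R * R)) (f xi : R -> R -> V3) (b11 b12 b21 b22 : R -> R -> R).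
Hypotheses (oU : open U) (sxi : smooth_on U xi).
Hypothesis weingarten_u : forall u v, U (u, v) ->
  pu xi u v = - (b11 u v *: pu f u v) - b21 u v *: pv f u v.
Hypothesis weingarten_v : forall u v, U (u, v) ->
  pv xi u v = - (b12 u v *: pu f u v) - b22 u v *: pv f u v.
Variables (a : R -> R -> V3) (c : R).
Hypotheses (sa : smooth_on U a) (a_xi : forall s t, U (s, t) -> dot (a s t) (xi s t) = c).

Lemma pu_dot_xi u v : U (u, v) ->
  dot (pu a u v) (xi u v) = b11 u v * dot (a u v) (pu f u v) + b21 u v * dot (a u v) (pv f u v).
Proof.
move=> Uuv; rewrite (pu_dot_const oU sa sxi a_xi Uuv) weingarten_u //.
move: (a u v) (pu f u v) (pv f u v) => n fu fv.
by rewrite dotDr !dotNr !dotZr opprD !opprK.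
Qed.

Lemma pv_dot_xi u v : U (u, v) ->
  dot (pv a u v) (xi u v) = b12 u v * dot (a u v) (pu f u v) + b22 u v * dot (a u v) (pv f u v).
Proof.
move=> Uuv; rewrite (pv_dot_const oU sa sxi a_xi Uuv) weingarten_v //.
move: (a u v) (pu f u v) (pv f u v) => n fu fv.
by rewrite dotDr !dotNr !dotZr opprD !opprK.
Qed.

End ShapeOperator.

Section Conormal.
Variable R : realType.
Local Notation V3 := 'rV[R]_3.
Variables (U : set (R * R)) (f xi nu : R -> R -> V3).
Hypotheses (oU : open U) (snu : smooth_on U nu).
Hypothesis conormal : forall u v, U (u, v) ->
  [/\ dot (nu u v) (pu f u v) = 0, dot (nu u v) (pv f u v) = 0 & dot (nu u v) (xi u v) = 1].
Variable X : R -> R -> V3.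
Hypotheses (sX : smooth_on U X) (nu_X : forall s t, U (s, t) -> dot (nu s t) (X s t) = 0).

Lemma pu_conormal_dot (r : R) u v : U (u, v) ->
  (exists c1 c2 : R, pu X u v = c1 *: pu f u v + c2 *: pv f u v + r *: xi u v) ->
  dot (pu nu u v) (X u v) = - r.
Proof.
move=> Uuv [c1 [c2 Xu]]; have [nu_fu nu_fv nu_xi] := conormal Uuv.
by rewrite (pu_dot_const oU snu sX nu_X Uuv) Xu (dot_conormal_frame _ _ _ nu_fu nu_fv nu_xi).
Qed.

Lemma pv_conormal_dot (r : R) u v : U (u, v) ->
  (exists c1 c2 : R, pv X u v = c1 *: pu f u v + c2 *: pv f u v + r *: xi u v) ->
  dot (pv nu u v) (X u v) = - r.
Proof.
move=> Uuv [c1 [c2 Xv]]; have [nu_fu nu_fv nu_xi] := conormal Uuv.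
by rewrite (pv_dot_const oU snu sX nu_X Uuv) Xv (dot_conormal_frame _ _ _ nu_fu nu_fv nu_xi).
Qed.

End Conormal.

Theorem lemma3p2 (R : realType) (U : set (R * R))
    (f xi nu : R -> R -> 'rV[R]_3) (rho b11 b12 b21 b22 : R -> R -> R) :
  open U ->
  smooth_on U f -> smooth_on U xi -> smooth_on U nu ->
  (* xi is transversal to f (so f is an immersion) *)
  (forall u v, U (u, v) -> det3 (pu f u v) (pv f u v) (xi u v) != 0) ->
  (* Gauss formula D_X f_* Y = f_*(nabla_X Y) + h(X,Y) xi, with h positive
     definite and (u,v) isothermal: h11 = h22 = rho > 0, h12 = 0 *)
  (forall u v, U (u, v) -> 0 < rho u v) ->
  (forall u v, U (u, v) -> exists c1 c2 : R,
     pu (pu f) u v = c1 *: pu f u v + c2 *: pv f u v + rho u v *: xi u v) ->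
  (forall u v, U (u, v) -> exists c1 c2 : R,
     pv (pu f) u v = c1 *: pu f u v + c2 *: pv f u v + 0 *: xi u v) ->
  (forall u v, U (u, v) -> exists c1 c2 : R,
     pv (pv f) u v = c1 *: pu f u v + c2 *: pv f u v + rho u v *: xi u v) ->
  (* xi equiaffine (tau = 0), with shape operator matrix (b_ij) *)
  (forall u v, U (u, v) ->
     pu xi u v = - (b11 u v *: pu f u v) - b21 u v *: pv f u v) ->
  (forall u v, U (u, v) ->
     pv xi u v = - (b12 u v *: pu f u v) - b22 u v *: pv f u v) ->
  (* nu is the co-normal *)
  (forall u v, U (u, v) ->
     [/\ dot (nu u v) (pu f u v) = 0, dot (nu u v) (pv f u v) = 0
       & dot (nu u v) (xi u v) = 1]) ->
  forall u v, U (u, v) ->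
    let delta := det3 (pu f u v) (pv f u v) (xi u v)
                 * det3 (nu u v) (pu nu u v) (pv nu u v) / rho u v in
    [/\ b11 u v = - delta^-1 * dot (pu (pu nu) u v) (xi u v),
        b12 u v = - delta^-1 * dot (pv (pu nu) u v) (xi u v),
        b21 u v = - delta^-1 * dot (pv (pu nu) u v) (xi u v)
      & b22 u v = - delta^-1 * dot (pv (pv nu) u v) (xi u v)].
Proof.
move=> oU sf sxi snu _ rho_gt0 gauss_uu gauss_uv gauss_vv wein_u wein_v conormal u v Uuv delta.
have [sfu sfv] := (smooth_on_pu sf, smooth_on_pv sf).
have [snuu snuv] := (smooth_on_pu snu, smooth_on_pv snu).
have nu_fu s t : U (s, t) -> dot (nu s t) (pu f s t) = 0 by case/conormal.
have nu_fv s t : U (s, t) -> dot (nu s t) (pv f s t) = 0 by case/conormal.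
have nu_xi s t : U (s, t) -> dot (nu s t) (xi s t) = 1 by case/conormal.
have nuu_fu : dot (pu nu u v) (pu f u v) = - rho u v :=
  pu_conormal_dot oU snu conormal sfu nu_fu Uuv (gauss_uu u v Uuv).
have nuv_fv : dot (pv nu u v) (pv f u v) = - rho u v :=
  pv_conormal_dot oU snu conormal sfv nu_fv Uuv (gauss_vv u v Uuv).
have nuv_fu : dot (pv nu u v) (pu f u v) = 0.
  by have := pv_conormal_dot oU snu conormal sfu nu_fu Uuv (gauss_uv u v Uuv); rewrite oppr0.
have gauss_vu : exists c1 c2 : R,
    pu (pv f) u v = c1 *: pu f u v + c2 *: pv f u v + 0 *: xi u v.
  by rewrite (pu_pvC oU sf Uuv); exact: gauss_uv.
have nuu_fv : dot (pu nu u v) (pv f u v) = 0.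
  by have := pu_conormal_dot oU snu conormal sfv nu_fv Uuv gauss_vu; rewrite oppr0.
have nuu_xi s t : U (s, t) -> dot (pu nu s t) (xi s t) = 0.
  move=> Ust; rewrite (pu_dot_xi oU sxi wein_u snu nu_xi Ust).
  by rewrite (nu_fu s t Ust) (nu_fv s t Ust) !mulr0 addr0.
have nuv_xi s t : U (s, t) -> dot (pv nu s t) (xi s t) = 0.
  move=> Ust; rewrite (pv_dot_xi oU sxi wein_v snu nu_xi Ust).
  by rewrite (nu_fu s t Ust) (nu_fv s t Ust) !mulr0 addr0.
have rho_neq0 : rho u v != 0 by rewrite gt_eqF ?rho_gt0.
have -> : delta = rho u v.
  exact: det3_dual_frame rho_neq0 (nu_fu u v Uuv) (nu_fv u v Uuv) (nu_xi u v Uuv)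
    nuu_fu nuu_fv (nuu_xi u v Uuv) nuv_fu nuv_fv (nuv_xi u v Uuv).
split.
- by rewrite (pu_dot_xi oU sxi wein_u snuu nuu_xi Uuv) nuu_fu nuu_fv; field.
- by rewrite (pv_dot_xi oU sxi wein_v snuu nuu_xi Uuv) nuu_fu nuu_fv; field.
- rewrite -(pu_pvC oU snu Uuv) (pu_dot_xi oU sxi wein_u snuv nuv_xi Uuv).
  by rewrite nuv_fu nuv_fv; field.
- by rewrite (pv_dot_xi oU sxi wein_v snuv nuv_xi Uuv) nuv_fu nuv_fv; field.
Qed.
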